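(* Let $(K,v)$ be a valued field and let $\mathcal C=(\rho_i)_{i\in A}$ be a totally ordered family of inner nodes of $\mathcal T$ containing no maximal element, indexed by a totally ordered set $A$ so that $i\mapsto\rho_i$ is an order isomorphism. A nonzero $f\in K[x]$ is $\mathcal C$-stable if and only if $\operatorname{in}_{\rho_i}f$ is a unit in $\mathcal G_{\rho_i}$ for some $i\in A$.
   Context: $\Gamma$ is the value group of $v$, $\Gamma_{\mathbb Q}=\Gamma\otimes\mathbb Q$. $\mathcal T$ is the set of valuations $\mu$ on $K[x]$ with values in $\Gamma_{\mathbb Q}\cup\{\infty\}$, $\mu|_K=v$, $\mu^{-1}(\infty)=\{0\}$, partially ordered by $\mu\le\nu$ iff $\mu(f)\le\nu(f)$ for all $f\in K[x]$. For $\mu\in\mathcal T$ with value group $\Gamma_\mu$, the graded algebra is $\mathcal G_\mu=\bigoplus_{\alpha\in\Gamma_\mu}\mathcal P_\alpha/\mathcal P_\alpha^+$, where $\mathcal P_\alpha=\{g:\mu(g)\ge\alpha\}$, $\mathcal P^+_\alpha=\{g:\mu(g)>\alpha\}$, and $\operatorname{in}_\mu g=g+\mathcal P^+_{\mu(g)}$ for $g\ne0$. A polynomial $g$ is $\mu$-irreducible if $\operatorname{in}_\mu g$ generates a prime homogeneous principal ideal, and $\mu$-minimal if $\operatorname{in}_\mu g\nmid\operatorname{in}_\mu f$ for all nonzero $f$ with $\deg f<\deg g$; a key polynomial for $\mu$ is a monic $\mu$-minimal, $\mu$-irreducible polynomial. $\mu$ is an inner node if it has a key polynomial (equivalently, it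 is not maximal in $\mathcal T$). A polynomial $f$ is $\mathcal C$-stable if there is $i\in A$ with $\rho_i(f)=\rho_j(f)$ for all $j>i$. *)

From HB Require Import structures.
From mathcomp Require Import all_boot all_order all_algebra.
Set Implicit Arguments. Unset Strict Implicit. Unset Printing Implicit Defensive.
Import Order.TTheory GRing.Theory Num.Theory.
Local Open Scope ring_scope.

(* Values of valuations live in  D u {oo}, modelled as  option D        *)
(* with None = oo.                                                      *)

Definition ordered_qspace (D : lmodType rat) (le : rel D) : Prop :=
  [/\ reflexive le, transitive le, antisymmetric le,
      total le & forall x y z : D, le x y -> le (x + z) (y + z)].

Section ValDefs.
Variables (D : lmodType rat) (le : rel D).

Definition vle (a b : option D) : Prop :=
  match a, b with
  | _, None => True
  | None, Some _ => False
  | Some x, Some y => le x y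
  end.
Definition vlt (a b : option D) : Prop := vle a b /\ a <> b.

Definition vadd (a b : option D) : option D :=
  match a, b with
  | Some x, Some y => Some (x + y)
  | _, _ => None
  end.

Definition is_valuation (R : comNzRingType) (w : R -> option D) : Prop :=
  [/\ w 0 = None, w 1 = Some 0,
      forall x y, w (x * y) = vadd (w x) (w y)
    & forall x y, (* w (x + y) >= min (w x) (w y) *)
        (vle (w x) (w y) -> vle (w x) (w (x + y)))
        /\ (vle (w y) (w x) -> vle (w y) (w (x + y)))].

(* (K,v) is a valued field and D is Gamma_Q = Gamma (x) Q, where Gamma is
   the value group of v: D is a Q-vector space in which every element has
   a positive integer multiple lying in Gamma = v(K \ {0}); i.e. D is the
   divisible hull of Gamma. *)
Definition valued_field_with_GammaQ (K : fieldType) (v : K -> option D) : Prop :=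
  [/\ ordered_qspace le,
      is_valuation v,
      forall c, v c = None -> c = 0
    & forall d : D, exists n : nat, exists c : K,
        (0 < n)%N /\ c != 0 /\ v c = Some (d *+ n)].

Variable K : fieldType.

Definition in_T (v : K -> option D) (mu : {poly K} -> option D) : Prop :=
  [/\ is_valuation mu,
      forall c : K, mu c%:P = v c
    & forall f, mu f = None -> f = 0].

Definition T_le (mu nu : {poly K} -> option D) : Prop :=
  forall f, vle (mu f) (nu f).
Definition T_lt (mu nu : {poly K} -> option D) : Prop :=
  T_le mu nu /\ exists f, mu f <> nu f.

(* Graded algebra G_mu, via initial forms.
   in_mu a = in_mu b  (for a, b in K[x])  iff  a = b or mu(a - b) > mu(a),
   (a ~_mu b);  products: in_mu a * in_mu b = in_mu (a b). *)
Definition in_eq (mu : {poly K} -> option D) (a b : {poly K}) : Prop :=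
  a = b \/ vlt (mu a) (mu (a - b)).

(* in_mu g divides in_mu f in G_mu (homogeneous elements; quotients of
   homogeneous elements in the graded domain G_mu are homogeneous,
   hence of the form in_mu h) *)
Definition in_dvd (mu : {poly K} -> option D) (g f : {poly K}) : Prop :=
  exists h, in_eq mu f (g * h).

(* in_mu f is a unit of G_mu: in_mu f * in_mu h = 1 = in_mu 1 for some h *)
Definition in_unit (mu : {poly K} -> option D) (f : {poly K}) : Prop :=
  exists h, in_eq mu (f * h) 1.

(* g is mu-irreducible: in_mu g generates a prime homogeneous principal
   ideal (proper, and prime tested on nonzero homogeneous elements) *)
Definition mu_irreducible (mu : {poly K} -> option D) (g : {poly K}) : Prop :=
  [/\ g != 0, ~ in_unit mu g
    & forall a b, a != 0 -> b != 0 -> in_dvd mu g (a * b) ->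
        in_dvd mu g a \/ in_dvd mu g b].

Definition mu_minimal (mu : {poly K} -> option D) (g : {poly K}) : Prop :=
  forall f : {poly K}, f != 0 -> (size f < size g)%N -> ~ in_dvd mu g f.

Definition key_polynomial (mu : {poly K} -> option D) (g : {poly K}) : Prop :=
  [/\ g \is monic, mu_minimal mu g & mu_irreducible mu g].

Definition inner_node (mu : {poly K} -> option D) : Prop :=
  exists g, key_polynomial mu g.

Definition C_stable (d : Order.disp_t) (A : orderType d)
    (rho : A -> {poly K} -> option D) (f : {poly K}) : Prop :=
  exists i : A, forall j : A, (i < j)%O -> rho i f = rho j f.

End ValDefs.

(* Let lam < mu in T and let phi be a polynomial of minimal degree with
   lam phi < mu phi, so that lam and mu agree below deg phi.  A nonzero r with
   deg r < deg phi is coprime to phi, and in a Bezout relation r s + t phi = 1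
   with deg s < deg phi the term t phi has strictly larger mu-value than r s;
   hence in_mu r is a unit.  If lam f = mu f, the same comparison shows that the
   remainder r of f modulo phi has mu r < mu (f - r), so in_mu f = in_mu r is a
   unit.  Conversely, if f h ~ 1 for lam then also f h ~ 1 for mu >= lam, and
   lam f + lam h = mu f + mu h with both summands nondecreasing forces
   lam f = mu f.  Applied to rho_i < rho_j this gives both directions. *)

From HB Require Import structures.
From mathcomp Require Import all_boot all_order all_algebra.
From mathcomp Require Import ring.
From Stdlib Require Import Classical.
Import Order.TTheory GRing.Theory Num.Theory.
Local Open Scope ring_scope.
Set Implicit Arguments.
Unset Strict Implicit.

Section OrderedValues.
Variables (D : lmodType rat) (le : rel D).
Hypothesis Hq : ordered_qspace le.
Implicit Types (x y z t : D) (a b c d : option D).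

Lemma qle_refl x : le x x.
Proof. by case: Hq. Qed.

Lemma qle_trans y x z : le x y -> le y z -> le x z.
Proof. by case: Hq => _ le_trans _ _ _; apply: le_trans. Qed.

Lemma qle_anti x y : le x y -> le y x -> x = y.
Proof. by case: Hq => _ _ le_anti _ _ xy yx; apply: le_anti; rewrite xy yx. Qed.

Lemma qle_total x y : le x y || le y x.
Proof. by case: Hq. Qed.

Lemma qleD2r z x y : le x y -> le (x + z) (y + z).
Proof. by case: Hq => _ _ _ _; apply. Qed.

Lemma qleD x y z t : le x y -> le z t -> le (x + z) (y + t).
Proof.
move=> xy zt; apply: (qle_trans (qleD2r z xy)).
by rewrite ![y + _]addrC; apply: qleD2r.
Qed.

Lemma qleD_eqr x y z t : le x y -> le z t -> x + z = y + t -> z = t.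
Proof.
move=> xy zt e; apply: (addrI x); apply: qle_anti.
  by rewrite ![x + _]addrC; apply: qleD2r.
by rewrite e; apply: qleD2r.
Qed.

Lemma vle_refl a : vle le a a.
Proof. by case: a => //= x; apply: qle_refl. Qed.

Lemma vle_trans b a c : vle le a b -> vle le b c -> vle le a c.
Proof. by case: a; case: b; case: c => //= z y x; apply: qle_trans. Qed.

Lemma vle_anti a b : vle le a b -> vle le b a -> a = b.
Proof. by case: a; case: b => //= y x xy yx; rewrite (qle_anti xy yx). Qed.

Lemma vle_total a b : vle le a b \/ vle le b a.
Proof.
case: a => [x|]; case: b => [y|] /=; try by [left|right].
by case/orP: (qle_total x y); [left|right].
Qed.

Lemma vle_or_lt a b : vle le a b \/ vlt le b a.
Proof.
have [->|ab] := eqVneq a b; first by left; apply: vle_refl.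
case: (vle_total a b) => [|ba]; [by left|right; split=> // ba_eq].
by rewrite ba_eq eqxx in ab.
Qed.

Lemma vlt_le_trans b a c : vlt le a b -> vle le b c -> vlt le a c.
Proof.
move=> [ab a_neq_b] bc; split; first exact: vle_trans ab bc.
by move=> ac; apply: a_neq_b; apply: vle_anti => //; rewrite ac.
Qed.

Lemma vlt_None a : ~ vlt le None a.
Proof. by case: a => [x|] [] //. Qed.

Lemma vadd_neqNone a b : vadd a b <> None -> a <> None /\ b <> None.
Proof. by case: a; case: b. Qed.

Lemma vaddC a b : vadd a b = vadd b a.
Proof. by case: a; case: b => //= y x; rewrite addrC. Qed.

Lemma vadd_le_lt a b c d : a <> None -> c <> None ->
  vle le a b -> vlt le c d -> vlt le (vadd a c) (vadd b d).
Proof.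
case: a => [a|//] _; case: c => [c|//] _.
case: b => [b|] /=; last by split.
case: d => [d|] /=; last by split.
move=> ab [cd c_neq_d]; split; first exact: qleD.
by case=> /(qleD_eqr ab cd) e; apply: c_neq_d; rewrite e.
Qed.

Lemma vadd_lt_le a b c d : a <> None -> c <> None ->
  vlt le a b -> vle le c d -> vlt le (vadd a c) (vadd b d).
Proof. by move=> *; rewrite vaddC [vadd b _]vaddC; apply: vadd_le_lt. Qed.

Lemma vadd_le_eql a b c d : a <> None -> c <> None ->
  vle le a b -> vle le c d -> vadd a c = vadd b d -> a = b.
Proof.
move=> a_fin c_fin ab cd e; apply: NNPP => a_neq_b.
by have [_] := vadd_lt_le a_fin c_fin (conj ab a_neq_b) cd; rewrite e.
Qed.

End OrderedValues.

Section Valuation.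
Variables (D : lmodType rat) (le : rel D).
Hypothesis Hq : ordered_qspace le.
Variables (R : comNzRingType) (w : R -> option D).
Hypothesis Hw : is_valuation le w.

Lemma val0 : w 0 = None. Proof. by case: Hw. Qed.
Lemma val1 : w 1 = Some 0. Proof. by case: Hw. Qed.
Lemma valM x y : w (x * y) = vadd (w x) (w y). Proof. by case: Hw. Qed.

Lemma valN x : w (- x) = w x.
Proof.
have wN1 : w (-1) = Some 0.
  have : vadd (w (-1)) (w (-1)) = Some 0 by rewrite -valM mulrNN mulr1 val1.
  case: (w (-1)) => //= u [uu0]; congr Some.
  (* D is torsion free, being a Q-vector space *)
  rewrite -[u]scale1r -(@mulVf _ 2%:R) // -scalerA scaler_nat.
  by rewrite -[u *+ 2]/(u + u) uu0 scaler0.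
by rewrite -mulN1r valM wN1 /=; case: (w x) => //= y; rewrite add0r.
Qed.

Lemma valD_ge_min x y : vle le (w x) (w (x + y)) \/ vle le (w y) (w (x + y)).
Proof.
case: Hw => _ _ _ /(_ x y) [ultra_x ultra_y].
by case: (vle_total Hq (w x) (w y)) => [/ultra_x|/ultra_y]; [left|right].
Qed.

Lemma valD_ge c x y : vle le c (w x) -> vle le c (w y) -> vle le c (w (x + y)).
Proof.
move=> cx cy; case: (valD_ge_min x y) => h.
  exact: (vle_trans Hq cx h).
exact: (vle_trans Hq cy h).
Qed.

Lemma valD_gt c x y : vlt le c (w x) -> vlt le c (w y) -> vlt le c (w (x + y)).
Proof.
move=> cx cy; case: (valD_ge_min x y) => h.
  exact: (vlt_le_trans Hq cx h).
exact: (vlt_le_trans Hq cy h).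
Qed.

Lemma valD_lt x y : vlt le (w x) (w y) -> w (x + y) = w x.
Proof.
move=> wx_lt_wy; apply: (vle_anti Hq _ (valD_ge (vle_refl Hq _) wx_lt_wy.1)).
have [//|wx_lt_wxy] := vle_or_lt Hq (w (x + y)) (w x).
have := valD_gt wx_lt_wxy (_ : vlt le (w x) (w (- y))).
by rewrite addrK valN => /(_ wx_lt_wy) [].
Qed.

Lemma val_near1 x : vlt le (Some 0) (w (x - 1)) -> w x = Some 0.
Proof.
by move=> x1_gt0; rewrite -[x](subrK 1) addrC valD_lt val1 // valN.
Qed.

End Valuation.

Section TwoValuations.
Variables (D : lmodType rat) (le : rel D).
Hypothesis Hq : ordered_qspace le.
Variables (R : comNzRingType) (lam mu : R -> option D).
Hypotheses (Hlam : is_valuation le lam) (Hmu : is_valuation le mu).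

Lemma vlt_of_agree_sum a b : lam a = mu a -> lam (a + b) = mu (a + b) ->
  vlt le (lam b) (mu b) -> vlt le (mu a) (mu b).
Proof.
move=> lam_a lam_ab [lamb_le_mub lamb_neq_mub].
have [mub_le_mua|//] := vle_or_lt Hq (mu b) (mu a).
have lamb_lt_lama : vlt le (lam b) (lam a).
  by rewrite lam_a; exact: (vlt_le_trans Hq (conj lamb_le_mub lamb_neq_mub) mub_le_mua).
have lam_ab_eq : lam (a + b) = lam b by rewrite addrC (valD_lt Hq Hlam).
case: lamb_neq_mub; apply: (vle_anti Hq lamb_le_mub).
by rewrite -lam_ab_eq lam_ab; apply: (valD_ge Hq Hmu mub_le_mua (vle_refl Hq _)).
Qed.

End TwoValuations.

Lemma ex_minimal_measure (T : Type) (m : T -> nat) (P : T -> Prop) :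
  (exists x, P x) -> exists x, P x /\ forall y, (m y < m x)%N -> ~ P y.
Proof.
case=> x; move: {2}(m x) (erefl (m x)) => n; elim/ltn_ind: n x => n IH x mx Px.
case: (classic (exists y, (m y < m x)%N /\ P y)) => [[y [y_lt_x Py]]|no_smaller].
  by apply: (IH (m y)) => //; rewrite -mx.
by exists x; split=> // y y_lt_x Py; apply: no_smaller; exists y.
Qed.

Section InitialForms.
Variables (D : lmodType rat) (le : rel D).
Hypothesis Hq : ordered_qspace le.
Variables (K : fieldType) (mu : {poly K} -> option D).
Hypothesis Hmu : is_valuation le mu.

Lemma in_eq1P g : in_eq le mu g 1 <-> vlt le (Some 0) (mu (g - 1)).
Proof.
split=> [[->|g_lt]|g1_gt0]; first by rewrite subrr (val0 Hmu).
  have := valD_lt Hq Hmu (x := g) (y := - (g - 1)).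
  rewrite (valN Hmu) opprB subrKC (val1 Hmu) => /(_ g_lt) mu_g.
  by rewrite mu_g.
by right; rewrite (val_near1 Hq Hmu g1_gt0).
Qed.

Lemma in_unitD a b : vlt le (mu a) (mu b) -> in_unit le mu a -> in_unit le mu (a + b).
Proof.
move=> ab [s /in_eq1P as1]; exists s; apply/in_eq1P.
have mu_as := val_near1 Hq Hmu as1.
have [a_fin s_fin] : mu a <> None /\ mu s <> None.
  by apply: vadd_neqNone; rewrite -(valM Hmu) mu_as.
rewrite mulrDl addrAC; apply: (valD_gt Hq Hmu as1).
rewrite -mu_as !(valM Hmu); exact: (vadd_lt_le Hq a_fin s_fin ab (vle_refl Hq _)).
Qed.

End InitialForms.

Section Comparison.
Variables (D : lmodType rat) (le : rel D).
Hypothesis Hq : ordered_qspace le.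
Variables (K : fieldType) (lam mu : {poly K} -> option D).
Implicit Types (a f g p q r : {poly K}).
Hypotheses (Hlam : is_valuation le lam) (Hmu : is_valuation le mu).
Hypothesis lam_le_mu : T_le le lam mu.

Lemma in_unit_val_eq f : in_unit le lam f -> lam f = mu f.
Proof.
case=> h /(in_eq1P Hq Hlam) fh1.
have lam_fh := val_near1 Hq Hlam fh1.
have mu_fh := val_near1 Hq Hmu (vlt_le_trans Hq fh1 (lam_le_mu _)).
have [f_fin h_fin] : lam f <> None /\ lam h <> None.
  by apply: vadd_neqNone; rewrite -(valM Hlam) lam_fh.
apply: (vadd_le_eql Hq f_fin h_fin (lam_le_mu f) (lam_le_mu h)).
by rewrite -(valM Hlam) -(valM Hmu) lam_fh mu_fh.
Qed.

Hypothesis lam_eq0 : forall p, lam p = None -> p = 0.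

Section MinimalDegree.
Variable phi : {poly K}.
Hypothesis lam_neq_mu_phi : lam phi <> mu phi.
Hypothesis agree_below_phi : forall a, (size a < size phi)%N -> lam a = mu a.

Lemma phi_neq0 : phi != 0.
Proof. by apply: contra_notN lam_neq_mu_phi => /eqP ->; rewrite (val0 Hlam) (val0 Hmu). Qed.

Lemma lam_lt_mu_mulphi q : q != 0 -> vlt le (lam (q * phi)) (mu (q * phi)).
Proof.
move=> q_neq0; rewrite (valM Hlam) (valM Hmu).
have fin p : p != 0 -> lam p <> None by move=> /eqP p_neq0 /lam_eq0.
exact: (vadd_le_lt Hq (fin _ q_neq0) (fin _ phi_neq0) (lam_le_mu q)
                  (conj (lam_le_mu phi) lam_neq_mu_phi)).
Qed.

Lemma coprimep_below r : r != 0 -> (size r < size phi)%N -> coprimep r phi.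
Proof.
move=> r_neq0 small_r; rewrite coprimep_def; apply: contraT => g_nonconst.
set g := gcdp r phi in g_nonconst.
have g_neq0 : g != 0 by rewrite gcdp_eq0 negb_and r_neq0.
have size_g : (1 < size g)%N by rewrite ltn_neqAle eq_sym g_nonconst size_poly_gt0.
have small_g : (size g < size phi)%N.
  exact: leq_ltn_trans (dvdp_leq r_neq0 (dvdp_gcdl r phi)) small_r.
have small_quo : (size (phi %/ g)%R < size phi)%N.
  by rewrite size_divp // ltn_subrL ltn_predRL size_g (leq_ltn_trans (leq0n _) small_g).
case: lam_neq_mu_phi; rewrite -(divpK (dvdp_gcdr r phi)) -/g.
by rewrite (valM Hlam) (valM Hmu) !agree_below_phi.
Qed.

Lemma in_unit_below r : r != 0 -> (size r < size phi)%N -> in_unit le mu r.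
Proof.
move=> r_neq0 small_r.
case/Bezout_eq1_coprimepP: (coprimep_below r_neq0 small_r) => -[u u'] /= bezout.
set s := u %% phi; set t := u %/ phi * r + u'.
have rs_t : r * s + t * phi = 1.
  by rewrite -bezout [in u * r](divp_eq u phi) /t; ring.
have small_s : (size s < size phi)%N by rewrite ltn_modp phi_neq0.
have [t0|t_neq0] := eqVneq t 0.
  by exists s; left; rewrite -rs_t t0 mul0r addr0.
have lam_rs : lam (r * s) = mu (r * s) by rewrite (valM Hlam) (valM Hmu) !agree_below_phi.
have lam_1 : lam (r * s + t * phi) = mu (r * s + t * phi).
  by rewrite rs_t (val1 Hlam) (val1 Hmu).
have rs_lt := vlt_of_agree_sum Hq Hlam Hmu lam_rs lam_1 (lam_lt_mu_mulphi t_neq0).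
have mu_rs : mu (r * s) = Some 0 by rewrite -(val1 Hmu) -rs_t (valD_lt Hq Hmu rs_lt).
exists s; apply/(in_eq1P Hq Hmu).
by rewrite -rs_t opprD addNKr (valN Hmu) -mu_rs.
Qed.

Lemma in_unit_of_agree f : f != 0 -> lam f = mu f -> in_unit le mu f.
Proof.
move=> f_neq0 lam_f; set r := f %% phi; set q := f %/ phi.
have small_r : (size r < size phi)%N by rewrite ltn_modp phi_neq0.
have f_eq : f = r + q * phi by rewrite addrC -divp_eq.
have [q0|q_neq0] := eqVneq q 0.
  rewrite f_eq q0 mul0r addr0 in f_neq0 *; exact: in_unit_below.
have lam_rq : lam (r + q * phi) = mu (r + q * phi) by rewrite -f_eq.
have r_lt := vlt_of_agree_sum Hq Hlam Hmu (agree_below_phi small_r) lam_rq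
                               (lam_lt_mu_mulphi q_neq0).
have r_neq0 : r != 0 by apply: contraPneq r_lt => ->; rewrite (val0 Hmu); apply: vlt_None.
by rewrite f_eq; apply: (in_unitD Hq Hmu r_lt); apply: in_unit_below.
Qed.

End MinimalDegree.

Lemma in_unit_of_val_eq f : (exists g, lam g <> mu g) -> f != 0 -> lam f = mu f ->
  in_unit le mu f.
Proof.
move=> /(ex_minimal_measure (fun p => size p)) [phi [lam_neq_mu_phi phi_min]].
apply: (in_unit_of_agree lam_neq_mu_phi) => a small_a.
exact: NNPP (phi_min a small_a).
Qed.

End Comparison.

Theorem lemma1p4 (D : lmodType rat) (le : rel D) (K : fieldType)
    (v : K -> option D) (d : Order.disp_t) (A : orderType d)
    (rho : A -> {poly K} -> option D) :
  valued_field_with_GammaQ le v ->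
  (forall i, in_T le v (rho i)) ->
  (forall i, inner_node le (rho i)) ->
  (forall i j : A, (i < j)%O -> T_lt le (rho i) (rho j)) ->
  (forall i : A, exists j : A, (i < j)%O) ->
  forall f : {poly K}, f != 0 ->
  (C_stable rho f <-> exists i : A, in_unit le (rho i) f).
Proof.
move=> [Hq _ _ _] rho_T _ rho_lt rho_unbounded f f_neq0.
have rho_val i : is_valuation le (rho i) by case: (rho_T i).
have rho_eq0 i p : rho i p = None -> p = 0 by case: (rho_T i) => _ _; apply.
split=> [[i stable_i]|[i unit_i]].
  have [j ij] := rho_unbounded i; have [rho_le rho_neq] := rho_lt i j ij.
  exists j; exact: (in_unit_of_val_eq Hq (rho_val i) (rho_val j) rho_le (rho_eq0 i)
                      rho_neq f_neq0 (stable_i j ij)).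
exists i => j ij.
exact: (in_unit_val_eq Hq (rho_val i) (rho_val j) (rho_lt i j ij).1 unit_i).
Qed.
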